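(* Let $(A,\mathrm{cl})$ be a finite pregeometry with dimension function $d$. Let $X\subseteq A$ be a union of closed sets with $d(X)\ge 2$, and let $\mathcal F(X)$ be the set of closed sets $F$ of $A$ with $F\subsetneq X$. Then $\alpha(X)=-\Delta(\mathcal F(X))$.
   Context: For a pregeometry $(A,\mathrm{cl})$ with dimension function $d$, a closed set is $F$ with $\mathrm{cl}(F)=F$. If $\mathcal F=\{F_i:i\in I\}$ is a non-empty finite set of distinct finite-dimensional closed sets, put $F_S=\bigcap_{i\in S}F_i$ for $\emptyset\ne S\subseteq I$ and $F_\emptyset=\bigcup_{i\in I}F_i$, and define $\Delta(\mathcal F)=\sum_{S\subseteq I}(-1)^{|S|}d(F_S)$. For a finite pregeometry, the $\alpha$-function is defined on unions of closed sets $X$ recursively by $\alpha(X)=|X|-d(X)-\sum_G\alpha(G)$, the sum over closed $G\subsetneq X$. *)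

From HB Require Import structures.
From mathcomp Require Import all_boot all_order all_algebra.
Set Implicit Arguments. Unset Strict Implicit. Unset Printing Implicit Defensive.
Import GRing.Theory Num.Theory.
Local Open Scope ring_scope.

Record pregeometry (T : finType) (cl : {set T} -> {set T}) : Prop := {
  pg_ext : forall A : {set T}, A \subset cl A;
  pg_mono : forall A B : {set T}, A \subset B -> cl A \subset cl B;
  pg_idem : forall A : {set T}, cl (cl A) = cl A;
  pg_exchange : forall (A : {set T}) (a b : T),
    a \in cl (b |: A) -> a \notin cl A -> b \in cl (a |: A)
  (* finite character is automatic since T is finite *)
}.

Definition closed (T : finType) (cl : {set T} -> {set T}) (F : {set T}) : bool :=
  cl F == F.

(* dimension: the size of a basis of X, i.e. the least size of a subset of X
   whose closure contains X *)
Definition gdim (T : finType) (cl : {set T} -> {set T}) (X : {set T}) : nat :=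
  \big[minn/#|X|]_(B : {set T} | (B \subset X) && (X \subset cl B)) #|B|.

Definition union_of_closed (T : finType) (cl : {set T} -> {set T}) (X : {set T}) : Prop :=
  exists FF : {set {set T}},
    (forall F, F \in FF -> closed cl F) /\ X = \bigcup_(F in FF) F.

Definition F_S (T : finType) (FF S : {set {set T}}) : {set T} :=
  if S == set0 then \bigcup_(F in FF) F else \bigcap_(F in S) F.

Definition Delta (T : finType) (cl : {set T} -> {set T}) (FF : {set {set T}}) : int :=
  \sum_(S in powerset FF) (-1) ^+ #|S| * (gdim cl (F_S FF S))%:Z.

(* alpha, via fuel recursion on the size (proper subsets are strictly smaller) *)
Fixpoint alpha_aux (T : finType) (cl : {set T} -> {set T}) (n : nat) (X : {set T}) : int :=
  match n with
  | 0 => 0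
  | n'.+1 => (#|X|%:Z - (gdim cl X)%:Z
              - \sum_(G : {set T} | closed cl G && (G \proper X)) alpha_aux cl n' G)%R
  end.

Definition alpha (T : finType) (cl : {set T} -> {set T}) (X : {set T}) : int :=
  alpha_aux cl #|X|.+1 X.

Definition FamX (T : finType) (cl : {set T} -> {set T}) (X : {set T}) : {set {set T}} :=
  [set F : {set T} | closed cl F & F \proper X].

From Pilot Require Import Defs.
From mathcomp Require Import all_boot all_order all_algebra.
Import Order.TTheory GRing.Theory Num.Theory.
Set Implicit Arguments. Unset Strict Implicit.
Local Open Scope ring_scope.

(* Write FF = F(X) and, for a subfamily S of FF, F_S for its intersection
   (the union of FF when S is empty).  The argument is an inclusion-exclusion
   over the subfamilies of FF and has three ingredients.
   1. Pure combinatorics of a finite family FF of finite sets: for A inside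
      the union of FF, sum_S (-1)^|S| [A <= F_S] is 1 if no member of FF
      contains A and 0 otherwise.  With A a point this gives
      sum_S (-1)^|S| |F_S| = 0, hence Delta(FF) = - sum_S (-1)^|S| e(F_S),
      where e(Y) = |Y| - d(Y) is the excess of Y.
   2. The recursion defining alpha says e(Y) is the sum of alpha(H) over H = Y
      and the closed H strictly inside Y; for Y = X or Y in F(X) these H are
      exactly the H <= Y with H = X or H in F(X).
   3. For a closure operator, an intersection of closed sets is closed, and
      since d(X) >= 2 every point x of X lies in cl{x} in F(X), so the union
      of F(X) is X.  Exchanging sums, (1) then kills every H except H = X. *)

Lemma alternating_powerset_sum (U : finType) (B : {set U}) :
  \sum_(S in powerset B) (-1) ^+ #|S| = (B == set0)%:R :> int.
Proof.
have [->|/set0Pn [a aB]] := eqVneq B set0.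
  by rewrite powerset0 big_set1 cards0 expr0.
(* the involution S <-> S (+) {a} pairs the subsets with opposite signs *)
rewrite (bigID (fun S : {set U} => a \in S)) /=.
rewrite (reindex_onto (fun S => a |: S) (fun S => S :\ a)); last first.
  by move=> S /andP[_ aS]; rewrite setD1K.
rewrite -[X in X + _]opprK addrC; apply/eqP; rewrite subr_eq0; apply/eqP.
rewrite -sumrN; apply: eq_big => S.
  rewrite !inE eqxx /= subUset sub1set aB /=.
  have [aS|aS] /= := boolP (a \in S); last by rewrite setU1K // eqxx !andbT.
  rewrite !andbF andbT; apply/esym/negbTE/negP => /andP[_ /eqP defS].
  by move: aS; rewrite -defS setD11.
by move=> /andP[_ aS]; rewrite cardsU1 aS exprS mulN1r opprK.
Qed.

Section SubfamilySums.
Variable U : finType.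

Lemma card_as_sum (A Y : {set U}) :
  A \subset Y -> #|A|%:Z = \sum_(x in Y) (x \in A)%:R.
Proof.
move=> sAY; rewrite [RHS](eq_bigr (fun x => if x \in A then 1 else 0)); last first.
  by move=> x _; case: (x \in A).
rewrite -big_mkcondr /= sumr_const -natz; congr (_%:R).
apply/esym/eq_card => x; rewrite -!topredE /= andbC.
by case: (boolP (x \in A)) => xA; [rewrite (subsetP sAY _ xA) | apply/esym/negbTE].
Qed.

Variable FF : {set {set U}}.

Local Notation cupFF := (\bigcup_(F in FF) F).

Lemma F_S_sub_cup (S : {set {set U}}) : S \subset FF -> F_S FF S \subset cupFF.
Proof.
rewrite /F_S; case: eqP => // /eqP /set0Pn [F FS] sSFF.
by apply: subset_trans (bigcap_inf _ FS) (bigcup_sup _ (subsetP sSFF F FS)).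
Qed.

Lemma subfamilies_containing (A : {set U}) : A \subset cupFF ->
  [set S in powerset FF | A \subset F_S FF S] = powerset [set F in FF | A \subset F].
Proof.
move=> sAcup; apply/setP => S; rewrite !inE /F_S.
have [->|_] := eqVneq S set0; first by rewrite !sub0set sAcup.
apply/andP/subsetP => [[/subsetP sSFF /bigcapsP sAS] F FS|sS].
  by rewrite inE sSFF ?sAS.
split; first by apply/subsetP => F /sS; rewrite inE => /andP[].
by apply/bigcapsP => F /sS; rewrite inE => /andP[].
Qed.

Lemma alternating_containment (A : {set U}) : A \subset cupFF ->
  \sum_(S in powerset FF) (-1) ^+ #|S| * (A \subset F_S FF S)%:R
    = ([set F in FF | A \subset F] == set0)%:R :> int.
Proof.
move=> sAcup; rewrite -alternating_powerset_sum -subfamilies_containing //.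
rewrite big_mkcond [RHS]big_mkcond; apply: eq_bigr => S _.
by rewrite !inE; case: (S \subset FF); case: (A \subset _); rewrite ?mulr1 ?mulr0.
Qed.

(* Summing the containment identity over the points of the union:
   the alternating sum of the cardinals |F_S| vanishes. *)
Lemma alternating_card_F_S :
  \sum_(S in powerset FF) (-1) ^+ #|S| * #|F_S FF S|%:Z = 0.
Proof.
rewrite (eq_bigr (fun S : {set {set U}} =>
    \sum_(x in cupFF) (-1) ^+ #|S| * ([set x] \subset F_S FF S)%:R)).
  rewrite exchange_big big1 //= => x /bigcupP [F FFF xF].
  rewrite alternating_containment; last by rewrite sub1set; apply/bigcupP; exists F.
  by case: eqP => // /setP /(_ F); rewrite !inE FFF sub1set xF.
move=> S SFF; rewrite (card_as_sum (F_S_sub_cup _)) -?powersetE // mulr_sumr.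
by apply: eq_bigr => x _; rewrite sub1set.
Qed.

Lemma alternating_weights (P : pred {set U}) (w : {set U} -> int) :
  (forall H, P H -> H \subset cupFF) ->
  \sum_(S in powerset FF) (-1) ^+ #|S| * \sum_(H | P H && (H \subset F_S FF S)) w H
    = \sum_(H | P H) w H * ([set F in FF | H \subset F] == set0)%:R.
Proof.
move=> Pcup; rewrite (eq_bigr (fun S : {set {set U}} =>
    \sum_(H | P H) w H * ((-1) ^+ #|S| * (H \subset F_S FF S)%:R))); last first.
  move=> S _; rewrite big_mkcondr mulr_sumr; apply: eq_bigr => H _.
  by case: (H \subset _); rewrite ?mulr1 ?mulr0 // mulrC.
rewrite exchange_big; apply: eq_bigr => H PH.
by rewrite -mulr_sumr alternating_containment ?Pcup.
Qed.

End SubfamilySums.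

Section Excess.
Variables (T : finType) (cl : {set T} -> {set T}).

Definition excess (Y : {set T}) : int := #|Y|%:Z - (gdim cl Y)%:Z.

Lemma Delta_excess (FF : {set {set T}}) :
  Delta cl FF = - \sum_(S in powerset FF) (-1) ^+ #|S| * excess (F_S FF S).
Proof.
rewrite /excess; under eq_bigr => S _ do rewrite mulrBr.
by rewrite sumrB alternating_card_F_S sub0r opprK.
Qed.

Lemma alpha_aux_fuel n m (Y : {set T}) :
  (#|Y| < n)%N -> (#|Y| < m)%N -> alpha_aux cl n Y = alpha_aux cl m Y.
Proof.
elim: n m Y => [|n IH] [|m] Y //= ltYn ltYm.
congr (_ - _); apply: eq_bigr => G /andP[_ /proper_card ltGY].
by apply: IH; apply: leq_trans ltGY _.
Qed.

Lemma excess_alpha (Y : {set T}) :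
  excess Y = alpha cl Y + \sum_(G | Defs.closed cl G && (G \proper Y)) alpha cl G.
Proof.
suff -> : alpha cl Y = excess Y - \sum_(G | Defs.closed cl G && (G \proper Y)) alpha cl G.
  by rewrite subrK.
rewrite {1}/alpha /=; congr (_ - _); apply: eq_bigr => G /andP[_ /proper_card ltGY].
exact: alpha_aux_fuel.
Qed.

Variable X : {set T}.

Definition below_X (H : {set T}) : bool := (H == X) || (H \in FamX cl X).

Lemma below_X_sub H : below_X H -> H \subset X.
Proof. by case/orP => [/eqP ->|]; rewrite ?inE => // /andP[_ /proper_sub]. Qed.

Lemma excess_below_X (Y : {set T}) : below_X Y ->
  excess Y = \sum_(H | below_X H && (H \subset Y)) alpha cl H.
Proof.
move=> bY; rewrite excess_alpha [RHS](bigD1 Y) ?bY ?subxx //=; congr (_ + _).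
apply: eq_bigl => H; rewrite /below_X inE -andbA [H \proper Y]properEneq.
case/orP: bY => [/eqP ->|]; have [->|nHX] /= := eqVneq H X.
- by rewrite !andbF.
- by rewrite properEneq nHX /= andbT -andbA andbb.
- by move=> /[!inE] /andP[_ /andP[_ /negbTE ->]]; rewrite !andbF.
- move=> /[!inE] /andP[_ pYX]; case: (boolP (H \subset Y)) => sHY; rewrite ?andbF //.
  by rewrite (sub_proper_trans sHY pYX) /= !andbT.
Qed.

End Excess.

Section ClosureOperator.
Variables (T : finType) (cl : {set T} -> {set T}).
Hypothesis Hpg : pregeometry cl.

Lemma closed_bigcap (S : {set {set T}}) :
  (forall F, F \in S -> Defs.closed cl F) -> Defs.closed cl (\bigcap_(F in S) F).
Proof.
move=> cS; rewrite /Defs.closed eqEsubset pg_ext // andbT.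
apply/bigcapsP => F FS; rewrite -(eqP (cS F FS)).
by apply: pg_mono => //; apply: bigcap_inf.
Qed.

Lemma gdim_le (X B : {set T}) : B \subset X -> X \subset cl B -> (gdim cl X <= #|B|)%N.
Proof.
move=> sBX sXB; rewrite /gdim -minEnat.
by apply: (bigmin_le_cond (T := nat)); rewrite sBX sXB.
Qed.

Variable X : {set T}.

(* If X is a union of closed sets of dimension at least 2, the closed sets
   properly inside X cover X: each x in X lies in cl {x}, which is not X. *)
Lemma bigcup_FamX : union_of_closed cl X -> (2 <= gdim cl X)%N ->
  \bigcup_(F in FamX cl X) F = X.
Proof.
move=> [FF0 [cFF0 defX]] dimX; apply/eqP; rewrite eqEsubset.
apply/andP; split; first by apply/bigcupsP => F; rewrite inE => /andP[_ /proper_sub].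
apply/subsetP => x xX; have := xX; rewrite {1}defX => /bigcupP [F0 F0FF xF0].
have sclxX : cl [set x] \subset X.
  apply: subset_trans (pg_mono Hpg _) _; first by rewrite sub1set; exact: xF0.
  by rewrite (eqP (cFF0 _ F0FF)) defX (bigcup_sup _ F0FF).
apply/bigcupP; exists (cl [set x]); last by rewrite -sub1set pg_ext.
rewrite inE /Defs.closed pg_idem // eqxx properEneq sclxX andbT /=.
apply: contraTneq dimX => clxX; rewrite -ltnNge.
by rewrite -(cards1 x) ltnS gdim_le ?sub1set ?clxX.
Qed.

Lemma F_S_below_X (S : {set {set T}}) : \bigcup_(F in FamX cl X) F = X ->
  S \subset FamX cl X -> below_X cl X (F_S (FamX cl X) S).
Proof.
rewrite /F_S /below_X => cupX sSF.
have [_|S0] := eqVneq S set0; first by rewrite cupX eqxx.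
have /set0Pn [F FS] := S0; have := subsetP sSF F FS; rewrite inE => /andP[_ pFX].
rewrite inE closed_bigcap ?(sub_proper_trans (bigcap_inf _ FS) pFX) ?orbT //.
by move=> G /(subsetP sSF); rewrite inE => /andP[].
Qed.

End ClosureOperator.

Theorem lemma4p2 (T : finType) (cl : {set T} -> {set T})
  (Hpg : pregeometry cl) (X : {set T})
  (HX : union_of_closed cl X) (Hd : (2 <= gdim cl X)%N) :
  alpha cl X = (- Delta cl (FamX cl X))%R.
Proof.
have cupX := bigcup_FamX Hpg HX Hd.
rewrite Delta_excess opprK.
under eq_bigr => S SF do rewrite (excess_below_X (F_S_below_X Hpg cupX _)) -?powersetE //.
rewrite alternating_weights => [|H /below_X_sub]; last by rewrite cupX.
(* only H = X is contained in no closed set properly inside X *)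
rewrite (bigD1 X) /below_X ?eqxx //= big1 => [|H /andP[/orP[/eqP -> | HF] nHX]].
- suff -> : [set F in FamX cl X | X \subset F] = set0 by rewrite eqxx mulr1 addr0.
  apply/setP => F; rewrite !inE; apply/negbTE/negP => /andP[/andP[_ pFX] sXF].
  by rewrite properE sXF andbF in pFX.
- by rewrite eqxx in nHX.
- suff /negbTE -> : [set F in FamX cl X | H \subset F] != set0 by rewrite mulr0.
  by apply/set0Pn; exists H; rewrite inE HF subxx.
Qed.
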